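(* Let $p\ge2$ and $0\le r<k$ be integers and $\alpha>k$ real. Then $$\sum_{n=1}^\infty\frac{H_{n+\alpha-r}-H_{n+\alpha-k}}{n^p}=\sum_{i=1}^{p-1}(-1)^{i-1}\zeta(p+1-i)\Big(H_{\alpha-r}^{(i)}-H_{\alpha-k}^{(i)}\Big)+(-1)^{p-1}\sum_{j=1}^{k-r}\frac{H_{j+\alpha-k}}{(j+\alpha-k)^p},$$ and moreover $H_{\alpha-r}^{(i)}-H_{\alpha-k}^{(i)}=\sum_{j=1}^{k-r}(j+\alpha-k)^{-i}$ for every integer $i\ge1$.
   Context: Shifted harmonic numbers: for a real $\alpha$ that is not a negative integer, $H_\alpha := \sum_{k=1}^\infty\left(\frac1k-\frac1{k+\alpha}\right)$ and, for integers $m\ge 2$, $H_\alpha^{(m)} := \sum_{k=1}^\infty\left(\frac1{k^m}-\frac1{(k+\alpha)^m}\right)=\zeta(m)-\zeta(m,\alpha+1)$, where $\zeta$ is the Riemann zeta function and $\zeta(s,\alpha+1)=\sum_{n=1}^\infty (n+\alpha)^{-s}$ is the Hurwitz zeta function; $H_\alpha^{(1)}:=H_\alpha$. Empty sums are $0$. *)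

From Stdlib Require Import Reals Lra Lia List ClassicalEpsilon.
Import ListNotations.
Open Scope R_scope.

(* Value of a convergent series sum_{n>=0} u n (chosen by classical epsilon;
   it is the genuine sum whenever the series converges). *)
Definition series_val (u : nat -> R) : R :=
  epsilon (inhabits 0) (fun l => infinite_sum u l).

(* Finite sum  sum_{i=m}^{n} f i  (empty, = 0, if n < m). *)
Definition sum_range (m n : nat) (f : nat -> R) : R :=
  fold_right Rplus 0 (map f (seq m (S n - m))).

Definition zeta (s : nat) : R :=
  series_val (fun n => / (INR (S n)) ^ s).

Definition Hm (m : nat) (a : R) : R :=
  series_val (fun n => / (INR (S n)) ^ m - / (INR (S n) + a) ^ m).

Definition H (a : R) : R := Hm 1 a.

(** Two telescoping facts drive the proof.  First, the series defining
    [H_x^(i)] telescopes under an integer shift, so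
    [H_{x+m}^(i) - H_x^(i) = sum_{j=1}^m (j+x)^(-i)]; with [x = alpha - k]
    and [m = k - r] this is the second claim, and for [i = 1] it turns the
    numerator of the series into [sum_j 1/(n + c_j)] with [c_j = j + alpha - k].
    Second, the partial fraction expansion
    [1/(n^p (n+c)) = sum_{i=1}^{p-1} (-1)^(i-1) c^(-i) n^(-(p+1-i))
                     + (-1)^(p-1) c^(-p) (1/n - 1/(n+c))]
    sums over [n] to zeta values and [H_c].  Summing over [j] and exchanging
    the two finite sums gives the first claim. *)

From Coquelicot Require Import Coquelicot.
From Stdlib Require Import Reals Lra Lia List ClassicalEpsilon FunctionalExtensionality.
Import ListNotations.
Open Scope R_scope.

Definition lsum (l : list nat) (f : nat -> R) : R := fold_right Rplus 0 (map f l).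

Lemma sum_range1_lsum (n : nat) (f : nat -> R) : sum_range 1 n f = lsum (seq 1 n) f.
Proof. unfold sum_range, lsum. now replace (S n - 1)%nat with n by lia. Qed.

Lemma lsum_app (l1 l2 : list nat) (f : nat -> R) :
  lsum (l1 ++ l2) f = lsum l1 f + lsum l2 f.
Proof. unfold lsum. induction l1 as [|x l1 IH]; simpl; [ring|]. rewrite IH; ring. Qed.

Lemma lsum_map_S (l : list nat) (f : nat -> R) :
  lsum (map S l) f = lsum l (fun i => f (S i)).
Proof. unfold lsum. now rewrite map_map. Qed.

Lemma lsum_ext_in (l : list nat) (f g : nat -> R) :
  (forall i, In i l -> f i = g i) -> lsum l f = lsum l g.
Proof. intros Hfg. unfold lsum. now rewrite (map_ext_in f g l Hfg). Qed.

Lemma lsum_plus (l : list nat) (f g : nat -> R) :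
  lsum l (fun i => f i + g i) = lsum l f + lsum l g.
Proof. unfold lsum. induction l as [|x l IH]; simpl; [ring|]. rewrite IH; ring. Qed.

Lemma lsum_scal (l : list nat) (c : R) (f : nat -> R) :
  lsum l (fun i => c * f i) = c * lsum l f.
Proof. unfold lsum. induction l as [|x l IH]; simpl; [ring|]. rewrite IH; ring. Qed.

Lemma lsum_swap (l1 l2 : list nat) (F : nat -> nat -> R) :
  lsum l1 (fun i => lsum l2 (F i)) = lsum l2 (fun j => lsum l1 (fun i => F i j)).
Proof.
  induction l1 as [|x l1 IH].
  - unfold lsum; simpl. induction l2 as [|y l2 IH2]; simpl; [reflexivity|].
    rewrite <- IH2; ring.
  - change (lsum l2 (F x) + lsum l1 (fun i => lsum l2 (F i))
      = lsum l2 (fun j => F x j + lsum l1 (fun i => F i j))).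
    now rewrite IH, lsum_plus.
Qed.

Lemma infinite_sum_ext (u v : nat -> R) (l : R) :
  (forall n, u n = v n) -> infinite_sum u l -> infinite_sum v l.
Proof. intros Huv. now replace v with u by (apply functional_extensionality; auto). Qed.

Lemma infinite_sum_plus (u v : nat -> R) (a b : R) :
  infinite_sum u a -> infinite_sum v b -> infinite_sum (fun n => u n + v n) (a + b).
Proof. rewrite <- !is_series_Reals. exact (is_series_plus u v a b). Qed.

Lemma infinite_sum_scal (c : R) (u : nat -> R) (a : R) :
  infinite_sum u a -> infinite_sum (fun n => c * u n) (c * a).
Proof. rewrite <- !is_series_Reals. exact (is_series_scal c u a). Qed.

Lemma infinite_sum_minus (u v : nat -> R) (a b : R) :
  infinite_sum u a -> infinite_sum v b -> infinite_sum (fun n => u n - v n) (a - b).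
Proof. rewrite <- !is_series_Reals. exact (is_series_minus u v a b). Qed.

Lemma infinite_sum_zero : infinite_sum (fun _ => 0) 0.
Proof.
  intros eps Heps. exists 0%nat. intros n _.
  rewrite sum_cte, Rmult_0_l. unfold Rdist. rewrite Rminus_0_r, Rabs_R0. lra.
Qed.

Lemma infinite_sum_lsum (l : list nat) (u : nat -> nat -> R) (L : nat -> R) :
  (forall j, In j l -> infinite_sum (u j) (L j)) ->
  infinite_sum (fun n => lsum l (fun j => u j n)) (lsum l L).
Proof.
  induction l as [|x l IH]; simpl; intros Hl.
  - exact infinite_sum_zero.
  - apply (infinite_sum_plus (u x) (fun n => lsum l (fun j => u j n))); auto.
Qed.

Lemma series_val_eq (u : nat -> R) (l : R) : infinite_sum u l -> series_val u = l.
Proof.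
  intros Hl. apply (uniqueness_sum u); [|exact Hl].
  unfold series_val. apply epsilon_spec. now exists l.
Qed.

Lemma infinite_sum_series_val_le (u v : nat -> R) (lv : R) :
  (forall n, 0 <= u n <= v n) -> infinite_sum v lv -> infinite_sum u (series_val u).
Proof.
  intros Huv Hv. destruct (Rseries_CV_comp u v Huv (exist _ lv Hv)) as [l Hl].
  now rewrite (series_val_eq u l).
Qed.

Lemma infinite_sum_telescope (g : nat -> R) :
  Un_cv g 0 -> infinite_sum (fun n => g n - g (S n)) (g 0%nat).
Proof.
  intros Hg eps Heps.
  assert (Hpartial : forall n, sum_f_R0 (fun n => g n - g (S n)) n = g 0%nat - g (S n)).
  { induction n as [|n IH]; simpl; [reflexivity|]. rewrite IH; ring. }
  destruct (Hg eps Heps) as [N HN]. exists N. intros n Hn.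
  rewrite Hpartial. specialize (HN (S n) ltac:(lia)). unfold Rdist in *.
  replace (g 0%nat - g (S n) - g 0%nat) with (- (g (S n) - 0)) by ring.
  now rewrite Rabs_Ropp.
Qed.

Lemma infinite_sum_telescope_shift (g : nat -> R) (m : nat) :
  Un_cv g 0 -> infinite_sum (fun n => g n - g (n + m)%nat) (lsum (seq 0 m) g).
Proof.
  intros Hg. induction m as [|m IH].
  - apply (infinite_sum_ext (fun _ => 0)); [|exact infinite_sum_zero].
    intros n; rewrite Nat.add_0_r; ring.
  - rewrite seq_S, lsum_app.
    replace (lsum [(0 + m)%nat] g) with (g (0 + m)%nat) by (unfold lsum; simpl; ring).
    apply (infinite_sum_ext (fun n => (g n - g (n + m)%nat) + (g (n + m)%nat - g (S (n + m))))).
    { intros n. replace (n + S m)%nat with (S (n + m)) by lia. ring. }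
    apply infinite_sum_plus; [exact IH|].
    apply (infinite_sum_telescope (fun n => g (n + m)%nat)).
    intros eps Heps. destruct (Hg eps Heps) as [N HN].
    exists N. intros n Hn. apply HN. lia.
Qed.

Lemma cv_inv_INR_S : Un_cv (fun n => / INR (S n)) 0.
Proof.
  apply is_lim_seq_Reals, (is_lim_seq_incr_1 (fun n => / INR n) 0).
  replace (Finite 0) with (Rbar_inv p_infty) by reflexivity.
  apply is_lim_seq_inv; [apply is_lim_seq_INR | discriminate].
Qed.

Lemma INR_S_ge1 (n : nat) : 1 <= INR (S n).
Proof. rewrite S_INR. pose proof (pos_INR n). lra. Qed.

Lemma Rinv_pow_le_contravar (a b : R) (i : nat) : 0 < a <= b -> / b ^ i <= / a ^ i.
Proof.
  intros [Ha Hab]. apply Rinv_le_contravar; [now apply pow_lt|].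
  apply pow_incr; lra.
Qed.

Lemma cv_inv_pow_shift (x : R) (i : nat) :
  0 <= x -> (1 <= i)%nat -> Un_cv (fun n => / (INR (S n) + x) ^ i) 0.
Proof.
  intros Hx Hi eps Heps. destruct (cv_inv_INR_S eps Heps) as [N HN].
  exists N. intros n Hn. specialize (HN n Hn). pose proof (INR_S_ge1 n).
  assert (Hpos : 0 < / (INR (S n) + x) ^ i) by (apply Rinv_0_lt_compat, pow_lt; lra).
  assert (Hle : / (INR (S n) + x) ^ i <= / INR (S n)).
  { apply Rinv_le_contravar; [lra|].
    apply Rle_trans with ((INR (S n) + x) ^ 1); [simpl; lra|].
    apply Rle_pow; [lra | exact Hi]. }
  unfold Rdist in *. rewrite Rminus_0_r, Rabs_right in * by lra. lra.
Qed.

Lemma Hm_correct (x : R) (i : nat) : 0 <= x -> (1 <= i)%nat ->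
  infinite_sum (fun n => / INR (S n) ^ i - / (INR (S n) + x) ^ i) (Hm i x).
Proof.
  intros Hx Hi. destruct (nfloor_ex x Hx) as [M [_ HM]].
  rewrite <- S_INR in HM.
  pose (g := fun n => / (INR (S n) + 0) ^ i).
  apply (infinite_sum_series_val_le _ (fun n => g n - g (n + S M)%nat) (lsum (seq 0 (S M)) g)).
  2:{ apply infinite_sum_telescope_shift, cv_inv_pow_shift; [lra | exact Hi]. }
  intros n. unfold g. pose proof (INR_S_ge1 n).
  replace (INR (S (n + S M)) + 0) with (INR (S n) + INR (S M))
    by (rewrite <- Nat.add_succ_l, plus_INR; ring).
  rewrite Rplus_0_r.
  pose proof (Rinv_pow_le_contravar (INR (S n)) (INR (S n) + x) i ltac:(lra)).
  pose proof (Rinv_pow_le_contravar (INR (S n) + x) (INR (S n) + INR (S M)) i ltac:(lra)).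
  lra.
Qed.

Lemma Hm_shift (x : R) (i m : nat) : 0 <= x -> (1 <= i)%nat ->
  Hm i (x + INR m) - Hm i x = lsum (seq 1 m) (fun j => / (INR j + x) ^ i).
Proof.
  intros Hx Hi. pose proof (pos_INR m).
  pose (g := fun n => / (INR (S n) + x) ^ i).
  assert (Hdiff : infinite_sum (fun n =>
     (/ INR (S n) ^ i - / (INR (S n) + (x + INR m)) ^ i)
     - (/ INR (S n) ^ i - / (INR (S n) + x) ^ i)) (lsum (seq 0 m) g)).
  { refine (infinite_sum_ext _ _ _ _
      (infinite_sum_telescope_shift g m (cv_inv_pow_shift x i Hx Hi))).
    intros n. unfold g. rewrite <- Nat.add_succ_l, plus_INR.
    replace (INR (S n) + INR m + x) with (INR (S n) + (x + INR m)) by ring. ring. }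
  rewrite (uniqueness_sum _ _ _
    (infinite_sum_minus _ _ _ _ (Hm_correct (x + INR m) i ltac:(lra) Hi) (Hm_correct x i Hx Hi))
    Hdiff).
  now rewrite <- seq_shift, lsum_map_S.
Qed.

Lemma zeta_correct (s : nat) : (2 <= s)%nat ->
  infinite_sum (fun n => / INR (S n) ^ s) (zeta s).
Proof.
  intros Hs. pose (h := fun n => / INR (S n)).
  apply (infinite_sum_series_val_le _ (fun n => 2 * (h n - h (S n))) (2 * h 0%nat)).
  2:{ apply infinite_sum_scal, infinite_sum_telescope, cv_inv_INR_S. }
  intros n. unfold h. pose proof (INR_S_ge1 n) as HN.
  set (N := INR (S n)) in *.
  replace (INR (S (S n))) with (N + 1) by (unfold N; rewrite (S_INR (S n)); ring).
  split; [left; apply Rinv_0_lt_compat, pow_lt; lra|].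
  apply Rle_trans with (/ N ^ 2).
  - apply Rinv_le_contravar; [apply pow_lt; lra | now apply Rle_pow].
  - (* [2 (1/N - 1/(N+1)) = 2/(N (N+1)) >= 1/N^2] because [N + 1 <= 2 N] *)
    replace (2 * (/ N - / (N + 1))) with (/ N ^ 2 + (N - 1) / (N ^ 2 * (N + 1)))
      by (field; lra).
    assert (0 <= (N - 1) / (N ^ 2 * (N + 1))).
    { apply Rdiv_le_0_compat; [lra|]. apply Rmult_lt_0_compat; [apply pow_lt|]; lra. }
    lra.
Qed.

Lemma inv_pow_mul_shift_partial_fraction (N c : R) (q : nat) : 0 < N -> 0 < c ->
  / (N ^ S q * (N + c)) =
  lsum (seq 1 q) (fun i => (-1) ^ (i - 1) / c ^ i / N ^ (S q + 1 - i))
  + (-1) ^ q / c ^ S q * (/ N - / (N + c)).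
Proof.
  intros HN Hc. induction q as [|q IH].
  - unfold lsum. simpl. field. lra.
  - (* peel off [1/(N^(q+2) (N+c)) = 1/(c N^(q+2)) - (1/c) * 1/(N^(q+1) (N+c))] *)
    change (lsum (seq 1 (S q)) ?f) with (f 1%nat + lsum (seq 2 q) f).
    rewrite <- (seq_shift q 1), lsum_map_S.
    assert (Hshift : lsum (seq 1 q) (fun i => (-1) ^ (S i - 1) / c ^ S i / N ^ (S (S q) + 1 - S i))
       = - / c * lsum (seq 1 q) (fun i => (-1) ^ (i - 1) / c ^ i / N ^ (S q + 1 - i))).
    { rewrite <- lsum_scal. apply lsum_ext_in. intros i Hi. apply in_seq in Hi.
      destruct i as [|i]; [lia|].
      replace (S (S i) - 1)%nat with (S i) by lia.
      replace (S i - 1)%nat with i by lia.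
      assert (N ^ (q + 1 - i) <> 0) by (apply pow_nonzero; lra).
      assert (c ^ i <> 0) by (apply pow_nonzero; lra).
      simpl. field. repeat split; auto; lra. }
    rewrite Hshift.
    replace (/ (N ^ S (S q) * (N + c))) with (/ c * / N ^ S (S q) - / c * / (N ^ S q * (N + c)))
      by (assert (N ^ q <> 0) by (apply pow_nonzero; lra); simpl; field; lra).
    rewrite IH. replace (S (S q) + 1 - 1)%nat with (S (S q)) by lia.
    assert (N ^ q <> 0) by (apply pow_nonzero; lra).
    assert (c ^ q <> 0) by (apply pow_nonzero; lra).
    simpl. field. lra.
Qed.

Lemma series_inv_pow_mul_shift (p : nat) (c : R) : (1 <= p)%nat -> 0 < c ->
  infinite_sum (fun n => / (INR (S n) ^ p * (INR (S n) + c)))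
    (lsum (seq 1 (p - 1)) (fun i => (-1) ^ (i - 1) / c ^ i * zeta (p + 1 - i))
     + (-1) ^ (p - 1) / c ^ p * H c).
Proof.
  intros Hp Hc.
  apply (infinite_sum_ext (fun n =>
    lsum (seq 1 (p - 1)) (fun i => (-1) ^ (i - 1) / c ^ i * / INR (S n) ^ (p + 1 - i))
    + (-1) ^ (p - 1) / c ^ p * (/ INR (S n) ^ 1 - / (INR (S n) + c) ^ 1))).
  { intros n. pose proof (INR_S_ge1 n).
    replace (INR (S n) ^ p) with (INR (S n) ^ S (p - 1)) by (f_equal; lia).
    rewrite (inv_pow_mul_shift_partial_fraction (INR (S n)) c (p - 1)) by lra.
    rewrite !pow_1. replace (S (p - 1)) with p by lia. reflexivity. }
  apply infinite_sum_plus.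
  - apply infinite_sum_lsum. intros i Hi. apply in_seq in Hi.
    apply infinite_sum_scal, zeta_correct. lia.
  - apply infinite_sum_scal, Hm_correct; [lra | lia].
Qed.

Lemma series_H_shift_diff (p m : nat) (a : R) : (1 <= p)%nat -> 0 <= a ->
  infinite_sum (fun n => (H (INR (S n) + a + INR m) - H (INR (S n) + a)) / INR (S n) ^ p)
    (lsum (seq 1 (p - 1)) (fun i => (-1) ^ (i - 1) * zeta (p + 1 - i)
                                    * (Hm i (a + INR m) - Hm i a))
     + (-1) ^ (p - 1) * lsum (seq 1 m) (fun j => H (INR j + a) / (INR j + a) ^ p)).
Proof.
  intros Hp Ha.
  assert (Hc : forall j, In j (seq 1 m) -> 0 < INR j + a).
  { intros j Hj. apply in_seq in Hj. pose proof (lt_0_INR j ltac:(lia)). lra. }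
  assert (Hsummand : forall n,
      lsum (seq 1 m) (fun j => / (INR (S n) ^ p * (INR (S n) + (INR j + a))))
      = (H (INR (S n) + a + INR m) - H (INR (S n) + a)) / INR (S n) ^ p).
  { intros n. pose proof (INR_S_ge1 n) as HN. unfold H.
    rewrite Hm_shift by (lra || lia). unfold Rdiv.
    rewrite Rmult_comm, <- lsum_scal. apply lsum_ext_in. intros j _.
    rewrite pow_1, Rinv_mult. f_equal. f_equal. ring. }
  apply (infinite_sum_ext _ _ _ Hsummand).
  replace (lsum (seq 1 (p - 1)) _ + _) with (lsum (seq 1 m) (fun j =>
    lsum (seq 1 (p - 1)) (fun i => (-1) ^ (i - 1) / (INR j + a) ^ i * zeta (p + 1 - i))
    + (-1) ^ (p - 1) / (INR j + a) ^ p * H (INR j + a))).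
  - apply infinite_sum_lsum. intros j Hj. now apply series_inv_pow_mul_shift, Hc.
  - rewrite lsum_plus, lsum_swap, <- lsum_scal. f_equal.
    + apply lsum_ext_in. intros i Hi. apply in_seq in Hi.
      rewrite Hm_shift, <- lsum_scal by (lra || lia).
      apply lsum_ext_in. intros j _. unfold Rdiv. ring.
    + apply lsum_ext_in. intros j _. unfold Rdiv. ring.
Qed.

Theorem mainTheorem9 (p k r : nat) (alpha : R)
  (hp : (2 <= p)%nat) (hrk : (r < k)%nat) (ha : INR k < alpha) :
  infinite_sum
    (fun n => (H (INR (S n) + alpha - INR r) - H (INR (S n) + alpha - INR k))
              / (INR (S n)) ^ p)
    (sum_range 1 (p - 1)
       (fun i => (-1) ^ (i - 1) * zeta (p + 1 - i)
                 * (Hm i (alpha - INR r) - Hm i (alpha - INR k)))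
     + (-1) ^ (p - 1)
       * sum_range 1 (k - r)
           (fun j => H (INR j + alpha - INR k) / (INR j + alpha - INR k) ^ p))
  /\
  (forall i : nat, (1 <= i)%nat ->
     Hm i (alpha - INR r) - Hm i (alpha - INR k)
     = sum_range 1 (k - r) (fun j => / (INR j + alpha - INR k) ^ i)).
Proof.
  set (a := alpha - INR k). set (m := (k - r)%nat).
  assert (Hr : forall y, y + alpha - INR r = y + a + INR m).
  { intros y. unfold a, m. rewrite minus_INR by lia. ring. }
  assert (Hk : forall y, y + alpha - INR k = y + a) by (intros y; unfold a; ring).
  replace (alpha - INR r) with (a + INR m) by (specialize (Hr 0); lra).
  rewrite !sum_range1_lsum. split.
  - apply (infinite_sum_ext (fun n => (H (INR (S n) + a + INR m) - H (INR (S n) + a))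
                                      / INR (S n) ^ p)).
    { intros n. now rewrite Hr, Hk. }
    replace (fun j => H (INR j + alpha - INR k) / (INR j + alpha - INR k) ^ p)
      with (fun j => H (INR j + a) / (INR j + a) ^ p)
      by (apply functional_extensionality; intros j; now rewrite Hk).
    apply series_H_shift_diff; unfold a; [lia | lra].
  - intros i Hi. rewrite sum_range1_lsum, Hm_shift by (unfold a; lra || lia).
    apply lsum_ext_in. intros j _. now rewrite Hk.
Qed.
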